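(* Let $g\geq 1$ and $n\geq 1$ be integers. Let the Heisenberg group $H_g$ act on the polynomial ring $\mathbf{C}[\ldots,X_\sigma,\ldots]$ in the $2^g$ variables $X_\sigma$, $\sigma\in\mathbf{F}_2^g$, as described in the context. Then the dimension of the space of $H_g$-invariant homogeneous polynomials of degree $4n$ is $$\dim\big(\mathbf{C}[\ldots,X_\sigma,\ldots]_{4n}\big)^{H_g}=2^{-2g}\left(\binom{2^g+4n-1}{4n}+(2^{2g}-1)\binom{2^{g-1}+2n-1}{2n}\right).$$
   Context: $\mu_4=\{z\in\mathbf{C}: z^4=1\}$. The Heisenberg group is $H_g=\mu_4\times\mathbf{F}_2^g\times\mathbf{F}_2^g$ with multiplication $(s,x,u)(t,y,v)=(st(-1)^{u\cdot y},x+y,u+v)$, where $u\cdot y=\sum_i u_iy_i$. It acts on the variables $X_\sigma$ ($\sigma\in\mathbf{F}_2^g$) by $(s,x,u)X_\sigma=s(-1)^{(x+\sigma)\cdot u}X_{x+\sigma}$, and this action is extended to polynomials as ring automorphisms. $\mathbf{C}[\ldots,X_\sigma,\ldots]_{d}$ denotes the space of homogeneous polynomials of degree $d$. *)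

From HB Require Import structures.
From mathcomp Require Import all_boot all_order all_algebra all_field.
From mathcomp Require Import mpoly.
Set Implicit Arguments. Unset Strict Implicit. Unset Printing Implicit Defensive.
Import GRing.Theory.
Local Open Scope ring_scope.

(* Field of coefficients: algC (algebraic closure of Q inside C). *)
Definition F2vec (g : nat) := {ffun 'I_g -> 'F_2}.

Definition nvars (g : nat) : nat := #|{: F2vec g}|.

Definition HPoly (g : nat) := {mpoly algC[nvars g]}.

Definition Xs (g : nat) (sigma : F2vec g) : HPoly g := 'X_(enum_rank sigma).

Definition dotF2 (g : nat) (u y : F2vec g) : 'F_2 := \sum_(i < g) u i * y i.

Definition sgnF2 (a : 'F_2) : algC := (-1) ^+ (a : nat).

(* image of X_sigma under (s, x, u) : s (-1)^{(x+sigma).u} X_{x+sigma} *)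
Definition heis_var (g : nat) (s : algC) (x u : F2vec g) (sigma : F2vec g)
  : HPoly g :=
  (s * sgnF2 (dotF2 (x + sigma) u)) *: Xs (x + sigma).

Definition heis_act (g : nat) (s : algC) (x u : F2vec g) (p : HPoly g)
  : HPoly g :=
  p \mPo [tuple heis_var s x u (enum_val i) | i < nvars g].

Definition Hg_invariant (g : nat) (p : HPoly g) : Prop :=
  forall (s : algC) (x u : F2vec g), s ^+ 4 = 1 -> heis_act s x u p = p.

Definition inv_hom (g d : nat) (p : HPoly g) : Prop :=
  p \is d.-homog /\ Hg_invariant p.

Definition lin_indep (g : nat) (B : seq (HPoly g)) : Prop :=
  forall c : 'I_(size B) -> algC,
    \sum_(i < size B) c i *: B`_i = 0 -> forall i, c i = 0.

Definition has_dim (g : nat) (P : HPoly g -> Prop) (N : nat) : Prop :=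
  exists B : seq (HPoly g),
    [/\ size B = N, forall b, b \in B -> P b, lin_indep B &
        forall p, P p -> exists c : 'I_(size B) -> algC,
                          p = \sum_(i < size B) c i *: B`_i].

Set Warnings "-notation-overridden,-ambiguous-paths,-notation-incompatible-prefix,-deprecated,-redundant-canonical-projection".
From HB Require Import structures.
From mathcomp Require Import all_boot all_order all_algebra all_field all_fingroup.
From mathcomp Require Import mpoly zify.
Set Implicit Arguments. Unset Strict Implicit. Unset Printing Implicit Defensive.
Import GRing.Theory Num.Theory.
Local Open Scope ring_scope.

(* An element (s, x, u) of H_g sends the monomial X^f, f : F_2^g -> N, to
   s^(deg f) (-1)^(x.u deg f) chi_u(f) X^(f(x + .)), where
   chi_u(f) = prod_sigma (-1)^(f(sigma) sigma.u).  Hence an invariant of degree 4n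
   has coefficients that are constant along translation orbits of exponent
   vectors and vanish off the "balanced" ones (chi_u(f) = 1 for all u), and the
   orbit sums of balanced exponent vectors form a basis: the dimension is the
   number of such orbits.  Burnside's lemma and the orthogonality of the
   characters chi_u give 2^(2g) times this number as the sum over (y, u) of
   T(y, u) = sum of chi_u(f) over the f of degree 4n fixed by y.  Each T(y, u) is
   a coefficient of a product of truncated geometric series: T(0, 0) counts all
   monomials of degree 4n, and for (y, u) <> (0, 0) pairing sigma with sigma + y
   (or with sigma + e_j where u_j = 1) reduces T(y, u) to the number of monomials
   of degree 2n in 2^(g-1) variables. *)

(** * Signs and vectors over F_2 *)

Lemma F2_cases (a : 'F_2) : a = 0 \/ a = 1.
Proof. by case: a => [[|[|//]]] ?; [left | right]; apply/val_inj. Qed.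

Lemma F2_addxx (a : 'F_2) : a + a = 0.
Proof. by case: (F2_cases a) => ->; apply/val_inj. Qed.

Lemma sgnF2_0 : sgnF2 0 = 1. Proof. exact: expr0. Qed.

Lemma sgnF2_1 : sgnF2 1 = -1. Proof. exact: expr1. Qed.

Lemma sgnF2D (a b : 'F_2) : sgnF2 (a + b) = sgnF2 a * sgnF2 b.
Proof.
have F2_11 : 1 + 1 = 0 :> 'F_2 by apply: F2_addxx.
by case: (F2_cases a) => ->; case: (F2_cases b) => ->;
  rewrite ?F2_11 ?addr0 ?add0r sgnF2_0 ?sgnF2_1 ?mul1r ?mulr1 ?mulrNN ?mulr1.
Qed.

Lemma sgnF2X_even (a : 'F_2) m : ~~ odd m -> sgnF2 a ^+ m = 1.
Proof.
by move=> m_even; rewrite /sgnF2 -exprM -signr_odd oddM (negbTE m_even) andbF.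
Qed.

Section Vectors.
Variable g : nat.
Local Notation V := (F2vec g).
Implicit Types (x y s u : V).

Lemma F2vec_addxx x : x + x = 0.
Proof. by apply/ffunP => i; rewrite !ffunE F2_addxx. Qed.

Lemma card_F2vec : #|V| = (2 ^ g)%N.
Proof. by rewrite card_ffun card_Fp // card_ord. Qed.

Lemma dotF2Dl x y u : dotF2 (x + y) u = dotF2 x u + dotF2 y u.
Proof. by rewrite /dotF2 -big_split; apply: eq_bigr => i _; rewrite ffunE mulrDl. Qed.

Lemma dotF2Dr s u v : dotF2 s (u + v) = dotF2 s u + dotF2 s v.
Proof. by rewrite /dotF2 -big_split; apply: eq_bigr => i _; rewrite ffunE mulrDr. Qed.

Lemma dotF20v u : dotF2 0 u = 0.
Proof. by rewrite /dotF2 big1 // => i _; rewrite ffunE mul0r. Qed.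

Lemma dotF2v0 s : dotF2 s 0 = 0.
Proof. by rewrite /dotF2 big1 // => i _; rewrite ffunE mulr0. Qed.

Definition basisv (j : 'I_g) : V := [ffun i => (i == j)%:R].

Lemma dotF2_basisv j u : dotF2 (basisv j) u = u j.
Proof.
rewrite /dotF2 (bigD1 j) //= ffunE eqxx mul1r big1 ?addr0 // => i /negbTE ij.
by rewrite ffunE ij mul0r.
Qed.

Lemma big_addl (R : Type) (idx : R) (op : Monoid.com_law idx) x (F : V -> R) :
  \big[op/idx]_s F (x + s) = \big[op/idx]_s F s.
Proof. by rewrite [RHS](reindex_inj (addrI x)). Qed.

Definition zero_coord (j : 'I_g) : {set V} := [set s : V | s j == 0].

Lemma big_pairs (R : Type) (idx : R) (op : Monoid.com_law idx) y (j : 'I_g)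
    (F : V -> R) : y j = 1 ->
  \big[op/idx]_s F s = \big[op/idx]_(s in zero_coord j) op (F s) (F (y + s)).
Proof.
move=> yj; rewrite [LHS](bigID (mem (zero_coord j))) big_split /=; congr (op _ _).
rewrite (reindex_inj (addrI y)) /=; apply: eq_bigl => s.
by rewrite !inE ffunE yj; case: (F2_cases (s j)) => ->; rewrite ?addr0 ?F2_addxx.
Qed.

Lemma card_zero_coord (j : 'I_g) : #|zero_coord j| = (2 ^ (g - 1))%N.
Proof.
have := @big_pairs _ 0%N addn (basisv j) j (fun=> 1%N).
rewrite ffunE eqxx => /(_ erefl); rewrite sum1_card sum_nat_const card_F2vec.
have g_gt0 : (0 < g)%N by apply: leq_ltn_trans (ltn_ord j).
rewrite (_ : 2 ^ g = 2 ^ (g - 1) * 2)%N; last by rewrite -expnSr subn1 prednK.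
by move/eqP; rewrite eqn_mul2r /= => /eqP.
Qed.

Lemma F2vec_neq0 y : y != 0 -> exists j, y j = 1.
Proof.
move=> y_neq0; have /forallPn[j yj] : ~~ [forall j, y j == 0].
  by apply: contra y_neq0 => /forallP y0; apply/eqP/ffunP => j; rewrite ffunE; apply/eqP.
by exists j; case: (F2_cases (y j)) yj => ->.
Qed.

End Vectors.

(* F_2^g acts on exponent vectors by translation; registering its additive
   group as a finGroupType gives access to the orbit counting of action.v. *)
HB.instance Definition _ (g : nat) := [finGroupMixin of {ffun 'I_g -> 'F_2} for +%R].

Section Exponents.
Variables g d : nat.
Local Notation V := (F2vec g).
Local Notation E := {ffun V -> 'I_d.+1}.
Implicit Types (x y s u : V) (f : E).

Definition shift x f : E := [ffun s => f (x + s)].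
Definition totdeg f : nat := \sum_s f s.
Definition chi u f : algC := \prod_s sgnF2 (dotF2 s u) ^+ f s.
Definition balanced f : bool := [forall u, chi u f == 1].

Lemma shift0 f : shift 0 f = f.
Proof. by apply/ffunP => s; rewrite ffunE add0r. Qed.

Lemma shiftD f x y : shift (x + y) f = shift y (shift x f).
Proof. by apply/ffunP => s; rewrite !ffunE addrA. Qed.

Lemma shiftK x : cancel (shift x) (shift x).
Proof. by move=> f; rewrite -shiftD F2vec_addxx shift0. Qed.

Lemma shift_fixedE x f s : shift x f = f -> f (x + s) = f s.
Proof. by move=> fix_f; rewrite -[in RHS]fix_f ffunE. Qed.

Definition shift_action := @TotalAction _ _ (fun f x => shift x f) shift0 shiftD.

Lemma totdeg_shift x f : totdeg (shift x f) = totdeg f.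
Proof. by rewrite /totdeg -[RHS](big_addl _ x); apply: eq_bigr => s _; rewrite ffunE. Qed.

Lemma chi_sign u f : chi u f = (-1) ^+ (\sum_s dotF2 s u * f s)%N.
Proof. by rewrite -prodrXr; apply: eq_bigr => s _; rewrite exprM. Qed.

Lemma chi_pm u f : chi u f = 1 \/ chi u f = -1.
Proof. by rewrite chi_sign -signr_odd; case: odd; [right | left]. Qed.

Lemma chi0 f : chi 0 f = 1.
Proof. by rewrite /chi big1 // => s _; rewrite dotF2v0 sgnF2_0 expr1n. Qed.

Lemma chiD u v f : chi (u + v) f = chi u f * chi v f.
Proof. by rewrite /chi -big_split; apply: eq_bigr => s _; rewrite dotF2Dr sgnF2D exprMn. Qed.

Lemma chi_shift u y f : chi u (shift y f) = sgnF2 (dotF2 y u) ^+ totdeg f * chi u f.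
Proof.
rewrite /chi /totdeg -prodrXr -big_split -[LHS](big_addl _ y); apply: eq_bigr => s _.
by rewrite ffunE addrA F2vec_addxx add0r dotF2Dl sgnF2D exprMn.
Qed.

Lemma balanced_shift y f : ~~ odd (totdeg f) -> balanced (shift y f) = balanced f.
Proof. by move=> even_f; apply: eq_forallb => u; rewrite chi_shift sgnF2X_even ?mul1r. Qed.

Lemma sum_chi f : \sum_u chi u f = if balanced f then #|V|%:R else 0.
Proof.
case: ifP => [/forallP bal_f | /negbT/forallPn[v chi_v]].
  by rewrite (eq_bigr (fun=> 1)) ?sumr_const // => u _; apply/eqP.
have {}chi_v : chi v f = -1 by case: (chi_pm v f) chi_v => ->; rewrite ?eqxx.
have : \sum_u chi u f = - \sum_u chi u f.
  by rewrite -[LHS](big_addl _ v) -sumrN; apply: eq_bigr => u _; rewrite chiD chi_v mulN1r.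
by move/eqP; rewrite -subr_eq0 opprK -mulr2n -mulr_natr mulf_eq0 pnatr_eq0 orbF => /eqP.
Qed.

End Exponents.

(** * The action on monomials *)

Section Monomials.
Variables g d : nat.
Local Notation V := (F2vec g).
Local Notation E := {ffun V -> 'I_d.+1}.
Implicit Types (x u : V) (f : E).

Definition mnm_of f : 'X_{1..nvars g} := [multinom (f (enum_val i) : nat) | i < nvars g].
Definition monX f : HPoly g := 'X_[mnm_of f].

Lemma big_nvars (R : Type) (idx : R) (op : Monoid.com_law idx) (F : V -> R) :
  \big[op/idx]_(i < nvars g) F (enum_val i) = \big[op/idx]_s F s.
Proof. by rewrite [RHS]big_enum_val. Qed.

Lemma mdeg_mnm_of f : mdeg (mnm_of f) = totdeg f.
Proof. by rewrite mdegE /totdeg -big_nvars; apply: eq_bigr => i _; rewrite mnmE. Qed.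

Lemma mnm_of_inj : injective mnm_of.
Proof.
move=> f1 f2 /mnmP eq_f; apply/ffunP => s; apply/val_inj.
by have := eq_f (enum_rank s); rewrite !mnmE enum_rankK.
Qed.

Lemma mnm_ofP (m : 'X_{1..nvars g}) : mdeg m = d -> exists f, m = mnm_of f.
Proof.
move=> deg_m; exists [ffun s => inord (m (enum_rank s))]; apply/mnmP => i.
rewrite mnmE ffunE enum_valK inordK // ltnS -deg_m mdegE.
by rewrite (bigD1 i) //= leq_addr.
Qed.

Lemma monXE f : monX f = \prod_s Xs s ^+ f s.
Proof. by rewrite /monX mpolyXE_id -big_nvars; apply: eq_bigr => i _; rewrite mnmE /Xs enum_valK. Qed.

Lemma heis_act_monX c x u f : heis_act c x u (monX f) =
  ((c * sgnF2 (dotF2 x u)) ^+ totdeg f * chi u f) *: monX (shift x f).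
Proof.
rewrite /heis_act comp_mpolyX.
under eq_bigr => i _ do rewrite tnth_mktuple mnmE.
rewrite (big_nvars _ (fun s => heis_var c x u s ^+ f s)) monXE.
under eq_bigr => s _ do rewrite /heis_var exprZn dotF2Dl sgnF2D mulrA exprMn.
rewrite scaler_prod big_split /= prodrXr; congr (_ *: _).
by rewrite -[LHS](big_addl _ x); apply: eq_bigr => s _; rewrite ffunE addrA F2vec_addxx add0r.
Qed.

End Monomials.

Section HomogeneousInvariants.
Variables g d : nat.
Local Notation V := (F2vec g).
Local Notation E := {ffun V -> 'I_d.+1}.
Implicit Types (x u : V) (f : E) (p : HPoly g).

Lemma homog_decomp p : p \is d.-homog ->
  p = \sum_(f : E | totdeg f == d) p@_(mnm_of f) *: monX f.
Proof.
move=> p_homog; apply/mpolyP => m; rewrite raddf_sum /=.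
under eq_bigr => f _ do rewrite mcoeffZ mcoeffX.
have [/eqP deg_m | deg_m] := boolP (mdeg m == d); last first.
  rewrite (dhomog_nemf_coeff p_homog deg_m) big1 // => f /eqP deg_f.
  case: eqP => [mf|]; last by rewrite mulr0.
  by rewrite -mf mdeg_mnm_of deg_f eqxx in deg_m.
have [f def_m] := mnm_ofP deg_m; subst m.
rewrite (bigD1 f) -?mdeg_mnm_of ?deg_m //= eqxx mulr1.
rewrite big1 ?addr0 // => f' /andP[_ f'f].
by rewrite (inj_eq (@mnm_of_inj _ _)) (negbTE f'f) mulr0.
Qed.

Lemma heis_act_homog p c x u : p \is d.-homog ->
  heis_act c x u p = \sum_(f : E | totdeg f == d)
    (p@_(mnm_of f) * ((c * sgnF2 (dotF2 x u)) ^+ d * chi u f)) *: monX (shift x f).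
Proof.
move=> p_homog; rewrite {1}(homog_decomp p_homog) /heis_act raddf_sum.
apply: eq_bigr => f /eqP deg_f.
by rewrite /= comp_mpolyZ -/(heis_act _ _ _ _) heis_act_monX scalerA deg_f.
Qed.

Lemma mcoeff_heis_act p c x u f : p \is d.-homog -> totdeg f = d ->
  (heis_act c x u p)@_(mnm_of (shift x f)) =
    (c * sgnF2 (dotF2 x u)) ^+ d * chi u f * p@_(mnm_of f).
Proof.
move=> p_homog deg_f; rewrite heis_act_homog // raddf_sum /=.
under eq_bigr => f' _ do rewrite mcoeffZ mcoeffX (inj_eq (@mnm_of_inj _ _)) (can_eq (shiftK x)).
rewrite (bigD1 f) ?deg_f //= eqxx mulr1 big1 ?addr0; first exact: mulrC.
by move=> f' /andP[_ /negbTE ->]; rewrite mulr0.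
Qed.

Lemma invariant_mcoeff_shift p x f : p \is d.-homog -> Hg_invariant p ->
  totdeg f = d -> p@_(mnm_of (shift x f)) = p@_(mnm_of f).
Proof.
move=> p_homog p_inv deg_f; rewrite -{1}(p_inv 1 x 0 (expr1n _ _)).
by rewrite mcoeff_heis_act // dotF2v0 sgnF2_0 mulr1 expr1n chi0 !mul1r.
Qed.

Lemma invariant_mcoeff_unbalanced p f : p \is d.-homog -> Hg_invariant p ->
  totdeg f = d -> ~~ balanced f -> p@_(mnm_of f) = 0.
Proof.
move=> p_homog p_inv deg_f /forallPn[u chi_u].
have {}chi_u : chi u f = -1 by case: (chi_pm u f) chi_u => ->; rewrite ?eqxx.
have := congr1 (mcoeff (mnm_of (shift 0 f))) (p_inv 1 0 u (expr1n _ _)).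
rewrite mcoeff_heis_act // shift0 dotF20v sgnF2_0 mulr1 expr1n chi_u mul1r mulN1r.
by move/eqP; rewrite eq_sym -subr_eq0 opprK -mulr2n -mulr_natl mulf_eq0 pnatr_eq0 => /eqP.
Qed.

Definition orbit_sum (A : {set E}) : HPoly g := \sum_(f in A) monX f.

Lemma mcoeff_orbit_sum A f : (orbit_sum A)@_(mnm_of f) = (f \in A)%:R.
Proof.
rewrite /orbit_sum raddf_sum /=.
under eq_bigr => f' _ do rewrite mcoeffX (inj_eq (@mnm_of_inj _ _)).
case: (boolP (f \in A)) => [Af | A'f].
  by rewrite (bigD1 f) //= eqxx big1 ?addr0 // => f' /andP[_ /negbTE ->].
by rewrite big1 // => f' Af'; case: eqP Af' A'f => // -> ->.
Qed.

Lemma lin_indep_orbit_sums (P : {set {set E}}) : trivIset P -> set0 \notin P ->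
  lin_indep [seq orbit_sum A | A <- enum P].
Proof.
move=> tiP P'0 c sum0 i.
have lt_enum (j : 'I_(size [seq orbit_sum A | A <- enum P])) : (j < size (enum P))%N.
  by rewrite -(size_map orbit_sum).
have P_nth (j : 'I_(size [seq orbit_sum A | A <- enum P])) : nth set0 (enum P) j \in P.
  by rewrite -mem_enum mem_nth ?lt_enum.
have [f Pi_f] : exists f, f \in nth set0 (enum P) i.
  by apply/set0Pn; apply: contraNneq P'0 => <-.
have := congr1 (mcoeff (mnm_of f)) sum0; rewrite raddf_sum mcoeff0 /=.
under eq_bigr => j _ do rewrite mcoeffZ (nth_map set0) // mcoeff_orbit_sum.
rewrite (bigD1 i) //= Pi_f mulr1 big1 ?addr0 // => j ji.
case Pj_f : (_ \in _); last by rewrite mulr0.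
have := def_pblock tiP (P_nth j) Pj_f; rewrite (def_pblock tiP (P_nth i) Pi_f).
by move/eqP; rewrite nth_uniq ?enum_uniq // (inj_eq val_inj) eq_sym (negbTE ji).
Qed.

End HomogeneousInvariants.

(** * A basis of orbit sums *)

Section InvariantBasis.
Variables g n : nat.
Local Notation d := (4 * n)%N.
Local Notation V := (F2vec g).
Local Notation E := {ffun V -> 'I_d.+1}.
Local Notation to := (shift_action g d).
Implicit Types (x u : V) (f : E) (p : HPoly g) (A : {set E}).

Definition balanced_exps : {set E} := [set f | (totdeg f == d) && balanced f].
Definition exp_orbits : {set {set E}} := orbit to [set: V] @: balanced_exps.

Lemma acts_balanced_exps : [acts [set: V], on balanced_exps | to].
Proof.
apply/actsP => x _ f; rewrite !inE /= totdeg_shift.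
by case: eqP => //= deg_f; rewrite balanced_shift // deg_f oddM.
Qed.

Lemma heis_act_balanced_monX c x u f : c ^+ 4 = 1 -> f \in balanced_exps ->
  heis_act c x u (monX f) = monX (shift x f).
Proof.
move=> c4; rewrite inE => /andP[/eqP deg_f /forallP bal_f].
have cs4 : (c * sgnF2 (dotF2 x u)) ^+ 4 = 1 by rewrite exprMn c4 sgnF2X_even ?mul1r.
by rewrite heis_act_monX (eqP (bal_f u)) mulr1 deg_f exprM cs4 expr1n scale1r.
Qed.

Lemma mem_exp_orbit A f : A \in exp_orbits -> f \in A -> f \in balanced_exps.
Proof.
case/imsetP=> f0 S_f0 -> orb_f; apply: subsetP orb_f.
by rewrite acts_sub_orbit ?acts_balanced_exps.
Qed.

Lemma heis_act_orbit_sum c x u A : c ^+ 4 = 1 -> A \in exp_orbits ->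
  heis_act c x u (orbit_sum A) = orbit_sum A.
Proof.
move=> c4 orb_A; have /imsetP[f0 _ def_A] := orb_A.
have actsA : [acts [set: V], on A | to] by rewrite def_A acts_orbit ?subsetT.
rewrite /orbit_sum /heis_act raddf_sum /= [RHS](reindex_acts to actsA (in_setT x)).
apply: eq_bigr => f Af; rewrite -/(heis_act _ _ _ _) heis_act_balanced_monX //.
exact: mem_exp_orbit Af.
Qed.

Definition orbit_coef p A : algC := if [pick f in A] is Some f then p@_(mnm_of f) else 0.

Lemma invariant_orbit_decomp p : p \is d.-homog -> Hg_invariant p ->
  p = \sum_(A in exp_orbits) orbit_coef p A *: orbit_sum A.
Proof.
move=> p_homog p_inv; rewrite {1}(homog_decomp p_homog).
rewrite (bigID (fun f : E => balanced f)) /= [X in _ + X]big1 ?addr0; last first.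
  move=> f /andP[/eqP deg_f unbal_f].
  by rewrite (invariant_mcoeff_unbalanced p_homog p_inv deg_f unbal_f) scale0r.
rewrite (eq_bigl (fun f => f \in balanced_exps)); last by move=> f; rewrite inE.
rewrite (set_partition_big _ (orbit_partition acts_balanced_exps)).
apply: eq_bigr => _ /imsetP[f0 S_f0 ->]; rewrite /orbit_coef /orbit_sum scaler_sumr.
case: pickP => [f1 orb_f1 | /(_ f0)]; last by rewrite orbit_refl.
have deg_f0 : totdeg f0 = d by move: S_f0; rewrite inE => /andP[/eqP].
have coef_orbit f : f \in orbit to [set: V] f0 -> p@_(mnm_of f) = p@_(mnm_of f0).
  by case/orbitP => x _ <-; apply: invariant_mcoeff_shift.
by apply: eq_bigr => f orb_f; rewrite !coef_orbit.
Qed.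

Lemma has_dim_exp_orbits : has_dim (@inv_hom g d) #|exp_orbits|.
Proof.
have [tiP P'0] : trivIset exp_orbits /\ set0 \notin exp_orbits.
  by case/and3P: (orbit_partition acts_balanced_exps) => _ -> ->.
exists [seq orbit_sum A | A <- enum exp_orbits]; split.
- by rewrite size_map cardE.
- move=> _ /mapP[A orb_A ->]; rewrite mem_enum in orb_A; split.
    rewrite rpred_sum // => f Af; rewrite dhomogX /= mdeg_mnm_of.
    by have := mem_exp_orbit orb_A Af; rewrite inE => /andP[].
  by move=> c x u c4; apply: heis_act_orbit_sum.
- exact: lin_indep_orbit_sums.
- move=> p [p_homog p_inv]; rewrite size_map.
  exists (fun i => orbit_coef p (nth set0 (enum exp_orbits) i)).
  rewrite {1}(invariant_orbit_decomp p_homog p_inv) -big_enum (big_nth set0) big_mkord.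
  by apply: eq_bigr => i _; rewrite (nth_map set0).
Qed.

End InvariantBasis.

(** * Counting the orbits *)

Section OrbitCounting.
Variables g n : nat.
Local Notation d := (4 * n)%N.
Local Notation V := (F2vec g).
Local Notation E := {ffun V -> 'I_d.+1}.
Local Notation to := (shift_action g d).

Definition fixed_char_sum (y u : V) : algC :=
  \sum_(f : E | (totdeg f == d) && (shift y f == f)) chi u f.

Lemma card_fix_balanced_exps y :
  (#|('Fix_(balanced_exps g n | to)[y])%g| * #|V|)%:R = \sum_u fixed_char_sum y u.
Proof.
rewrite /fixed_char_sum exchange_big /=.
under eq_bigr => f _ do rewrite sum_chi.
rewrite -big_mkcondr sumr_const natrM mulr_natl; congr (_ *+ _).
by apply: eq_card => f; rewrite !inE sub1set inE unfold_in /= andbAC.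
Qed.

Lemma card_exp_orbits :
  (#|exp_orbits g n| * #|V| * #|V|)%:R = \sum_y \sum_u fixed_char_sum y u.
Proof.
have := Frobenius_Cauchy (acts_balanced_exps g n); rewrite cardsT.
under eq_bigl do rewrite inE.
move=> <-.
by rewrite natrM natr_sum mulr_suml; apply: eq_bigr => y _; rewrite -natrM card_fix_balanced_exps.
Qed.

End OrbitCounting.

Lemma sum_bin_diag k c : (\sum_(j < c.+1) 'C(k + j, j) = 'C(k.+1 + c, c))%N.
Proof.
elim: c => [|c IHc]; first by rewrite big_ord1 !addn0 !bin0.
by rewrite big_ord_recr /= IHc !addSn !addnS binS addnC.
Qed.

Section TruncatedGeometricSeries.
Variable R : comNzRingType.
Implicit Types (p q : {poly R}) (w : R).

Definition tgeom (D : nat) w : {poly R} := \poly_(j < D.+1) w ^+ j.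

Lemma tgeom0 D : tgeom D 0 = 1.
Proof.
apply/polyP => j; rewrite coef_poly coef1 expr0n.
by case: j => [|j] //=; rewrite if_same.
Qed.

Lemma coef_prod_tgeom (I : finType) D (w : I -> R) c :
  (\prod_i tgeom D (w i))`_c =
    \sum_(f : {ffun I -> 'I_D.+1} | (\sum_i f i == c)%N) \prod_i w i ^+ f i.
Proof.
under eq_bigr => i _ do rewrite /tgeom poly_def.
rewrite bigA_distr_bigA coef_sum [RHS]big_mkcond /=; apply: eq_bigr => f _.
under eq_bigr => i _ do rewrite -mul_polyC.
rewrite big_split /= -rmorph_prod prodrXr mul_polyC coefZ coefXn eq_sym.
by case: eqP; rewrite ?mulr1 ?mulr0.
Qed.

Lemma coef_tgeom1X D k c : (0 < k)%N -> (c <= D)%N ->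
  (tgeom D 1 ^+ k)`_c = 'C(k + c - 1, c)%:R.
Proof.
case: k => // k _; rewrite addSn subn1 /=.
elim: k c => [|k IHk] c le_cD; first by rewrite expr1 coef_poly ltnS le_cD expr1n binn.
rewrite exprSr coefM -sum_bin_diag natr_sum; apply: eq_bigr => j _.
rewrite IHk; last exact: leq_trans (ltnSE (ltn_ord j)) le_cD.
by rewrite coef_poly ltnS (leq_trans (leq_subr _ _) le_cD) expr1n mulr1.
Qed.

Lemma sum_sign_rev c : \sum_(j < c.+1) (-1 : R) ^+ (c - j) = (~~ odd c)%:R.
Proof.
elim: c => [|c IHc]; first by rewrite big_ord1 expr0.
rewrite big_ord_recr /= subnn expr0.
under eq_bigr => j _ do rewrite subSn 1?exprS -1?ltnS //.
by rewrite -mulr_sumr IHc; case: (odd c); rewrite /= ?mulr0 ?add0r ?mulN1r ?addNr.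
Qed.

Lemma coef_tgeom_sign D c : (c <= D)%N ->
  (tgeom D 1 * tgeom D (-1))`_c = (tgeom D 1 \Po 'X^2)`_c.
Proof.
move=> le_cD; rewrite coefM coef_comp_poly_Xn // coef_poly dvdn2.
rewrite ltnS (leq_trans (leq_div _ _) le_cD) expr1n.
rewrite (_ : (if _ then 1 else 0) = (~~ odd c)%:R); last by case: (odd c).
rewrite -sum_sign_rev; apply: eq_bigr => j _.
have le_jD : (j <= D)%N := leq_trans (ltnSE (ltn_ord j)) le_cD.
by rewrite !coef_poly !ltnS le_jD (leq_trans (leq_subr _ _) le_cD) expr1n mul1r.
Qed.

Lemma coef_expr_trunc p q e k : (forall j, (j <= e)%N -> p`_j = q`_j) ->
  forall j, (j <= e)%N -> (p ^+ k)`_j = (q ^+ k)`_j.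
Proof.
move=> eq_pq; elim: k => [|k IHk] j le_je; first by rewrite !expr0.
rewrite !exprS !coefM; apply: eq_bigr => i _.
have le_ie : (i <= e)%N by apply: leq_trans le_je; rewrite -ltnS.
by rewrite eq_pq // IHk // (leq_trans (leq_subr _ _) le_je).
Qed.

Lemma coef_comp_X2_exp p k c : ((p \Po 'X^2) ^+ k)`_(2 * c) = (p ^+ k)`_c.
Proof. by rewrite -rmorphXn coef_comp_poly_Xn // dvdn_mulr // mulKn. Qed.

End TruncatedGeometricSeries.

Section FixedCharSums.
Variables g n : nat.
Local Notation d := (4 * n)%N.
Local Notation V := (F2vec g).
Local Notation E := {ffun V -> 'I_d.+1}.
Local Notation half_count := 'C(2 ^ (g - 1) + 2 * n - 1, 2 * n).
Implicit Types (y u s : V) (f : E).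

Lemma le_2n_d : (2 * n <= d)%N.
Proof. by rewrite leq_mul2r orbT. Qed.

Lemma d_double : d = (2 * (2 * n))%N.
Proof. by rewrite mulnA. Qed.

Lemma eq_double_d m : (2 * m == d)%N = (m == 2 * n)%N.
Proof. by rewrite d_double eqn_mul2l. Qed.

Lemma fixed_char_sum00 : fixed_char_sum n (0 : V) 0 = 'C(2 ^ g + d - 1, d)%:R.
Proof.
transitivity ((\prod_(s : V) tgeom d (1 : algC))`_d).
  rewrite coef_prod_tgeom; apply: eq_big => [f | f _]; first by rewrite shift0 eqxx andbT.
  by rewrite chi0 big1 // => s _; rewrite expr1n.
by rewrite prodr_const card_F2vec coef_tgeom1X ?expn_gt0.
Qed.

Lemma fixed_char_sum0u u : u != 0 -> fixed_char_sum n 0 u = half_count%:R.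
Proof.
(* s and basisv j + s carry opposite signs, and tgeom d 1 * tgeom d (-1) agrees
   with tgeom d 1 \Po 'X^2 up to degree d. *)
move=> u_neq0; have [j uj] := F2vec_neq0 u_neq0.
transitivity ((\prod_(s : V) tgeom d (sgnF2 (dotF2 s u)))`_d).
  by rewrite coef_prod_tgeom; apply: eq_bigl => f; rewrite shift0 eqxx andbT.
rewrite (big_pairs _ _ (_ : basisv j j = 1)) ?ffunE ?eqxx //.
under eq_bigr => s _ do rewrite dotF2Dl dotF2_basisv uj sgnF2D sgnF2_1 mulN1r.
rewrite (eq_bigr (fun=> tgeom d 1 * tgeom d (-1))) => [|s _]; last first.
  by case: (F2_cases (dotF2 s u)) => ->; rewrite ?sgnF2_0 ?sgnF2_1 ?opprK // mulrC.
rewrite prodr_const card_zero_coord (coef_expr_trunc (q := tgeom d 1 \Po 'X^2) (e := d)) //.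
  rewrite [X in _`_X]d_double.
  by rewrite coef_comp_X2_exp coef_tgeom1X ?expn_gt0 ?le_2n_d.
by move=> i le_id; rewrite coef_tgeom_sign.
Qed.

Section FixedByShift.
Variables (y : V) (j : 'I_g).
Hypothesis yj : y j = 1.

Lemma mem_zero_coord_addl s : (y + s \in zero_coord j) = (s \notin zero_coord j).
Proof. by rewrite !inE ffunE yj; case: (F2_cases (s j)) => ->; rewrite ?addr0 ?F2_addxx. Qed.

Lemma totdeg_fixed f : shift y f = f -> totdeg f = (2 * \sum_(s in zero_coord j) f s)%N.
Proof.
move=> fix_f; rewrite /totdeg (big_pairs _ _ yj) big_distrr /=; apply: eq_bigr => s _.
by rewrite (shift_fixedE _ fix_f) addnn -mul2n.
Qed.

Lemma chi_fixed u f : shift y f = f -> totdeg f = d -> chi u f = 1.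
Proof.
move=> fix_f deg_f; rewrite /chi (big_pairs _ _ yj).
rewrite (eq_bigr (fun s => sgnF2 (dotF2 y u) ^+ f s)) => [|s _]; last first.
  rewrite /= (shift_fixedE _ fix_f) dotF2Dl sgnF2D exprMn mulrCA -exprMn.
  by rewrite -sgnF2D F2_addxx sgnF2_0 expr1n mulr1.
rewrite prodrXr sgnF2X_even //.
move/eqP: deg_f; rewrite (totdeg_fixed fix_f) eq_double_d => /eqP ->.
by rewrite oddM.
Qed.

(* A fixed point of shift y is determined by its restriction to zero_coord j,
   which meets each pair {s, y + s} once. *)
Definition restrict f : E := [ffun s => if s \in zero_coord j then f s else ord0].
Definition pair_ext f : E := [ffun s => if s \in zero_coord j then f s else f (y + s)].

Lemma shift_pair_ext f : shift y (pair_ext f) = pair_ext f.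
Proof.
apply/ffunP => s; rewrite !ffunE mem_zero_coord_addl.
by case: (s \in zero_coord j); rewrite //= addrA F2vec_addxx add0r.
Qed.

Lemma pair_ext_restrict f : shift y f = f -> pair_ext (restrict f) = f.
Proof.
move=> fix_f; apply/ffunP => s; rewrite !ffunE mem_zero_coord_addl.
by case: ifP => [-> | ->] //=; rewrite (shift_fixedE _ fix_f).
Qed.

Lemma restrict_pair_ext f : restrict (pair_ext f) = restrict f.
Proof. by apply/ffunP => s; rewrite !ffunE; case: ifP => [->|]. Qed.

Lemma totdeg_restrict f : totdeg (restrict f) = (\sum_(s in zero_coord j) f s)%N.
Proof. by rewrite /totdeg [RHS]big_mkcond; apply: eq_bigr => s _; rewrite ffunE; case: ifP. Qed.

Lemma totdeg_pair_ext f : totdeg (pair_ext f) = (2 * \sum_(s in zero_coord j) f s)%N.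
Proof.
rewrite totdeg_fixed ?shift_pair_ext //; congr (2 * _)%N.
by apply: eq_bigr => s s0; rewrite ffunE s0.
Qed.

Lemma prod_zero_coord_weight f :
  \prod_s ((s \in zero_coord j)%:R : algC) ^+ f s = (restrict f == f)%:R.
Proof.
case: eqP => [def_f | ne_f].
  rewrite -def_f; apply: big1 => s _; rewrite ffunE.
  by case: (s \in zero_coord j); rewrite ?expr1n ?expr0.
have [s] : exists s, restrict f s != f s.
  by apply/existsP; apply: contra_notN ne_f => /forallP eq_f; apply/ffunP => s; apply/eqP.
rewrite ffunE; case: ifP => [|s_out fs_neq0]; first by rewrite eqxx.
rewrite (bigD1 s) //= s_out expr0n.
by case: eqP => [fs0|]; rewrite ?mul0r //; case/eqP: fs_neq0; apply: val_inj.
Qed.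

Lemma fixed_char_sum_fixed u : fixed_char_sum n y u = half_count%:R.
Proof.
rewrite /fixed_char_sum (eq_bigr (fun=> 1)) => [|f /andP[/eqP deg_f /eqP fix_f]]; last first.
  exact: chi_fixed.
rewrite (reindex_onto pair_ext restrict) => [|f /andP[_ /eqP fix_f]]; last first.
  exact: pair_ext_restrict.
rewrite (eq_bigl (fun h => (totdeg h == 2 * n)%N && (restrict h == h))) => [|h]; last first.
  rewrite restrict_pair_ext shift_pair_ext eqxx andbT totdeg_pair_ext eq_double_d.
  case: (restrict h =P h) => [def_h|]; rewrite ?andbF ?andbT //.
  by rewrite -[in RHS]def_h totdeg_restrict.
rewrite big_mkcondr /=.
transitivity ((\prod_s tgeom d ((s \in zero_coord j)%:R : algC))`_(2 * n)).
  rewrite coef_prod_tgeom; apply: eq_bigr => h _.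
  by rewrite prod_zero_coord_weight; case: eqP.
rewrite (bigID (mem (zero_coord j))) /= [X in _ * X]big1 ?mulr1 => [|s /negbTE ->]; last first.
  exact: tgeom0.
rewrite (eq_bigr (fun=> tgeom d 1)) => [|s ->] //.
by rewrite prodr_const card_zero_coord coef_tgeom1X ?expn_gt0 ?le_2n_d.
Qed.

End FixedByShift.

End FixedCharSums.

Lemma sum_fixed_char_sums g n :
  \sum_(y : F2vec g) \sum_u fixed_char_sum n y u =
    ('C(2 ^ g + 4 * n - 1, 4 * n)
       + (2 ^ g * 2 ^ g - 1) * 'C(2 ^ (g - 1) + 2 * n - 1, 2 * n))%:R.
Proof.
set C1 := 'C(_ + 2 * n - 1, _).
rewrite (bigD1 (0 : F2vec g)) //= (bigD1 (0 : F2vec g)) //= fixed_char_sum00.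
rewrite (eq_bigr (fun=> C1%:R)) => [|u /fixed_char_sum0u //].
rewrite [X in _ + X](eq_bigr (fun=> \sum_(u : F2vec g) C1%:R)) => [|y /F2vec_neq0[j yj]]; last first.
  by apply: eq_bigr => u _; rewrite (fixed_char_sum_fixed _ yj).
rewrite !sumr_const !cardC1 !card_F2vec.
move: 'C(_, 4 * n) C1 => c0 c; have := expn_gt0 2 g; move: (2 ^ g)%N => [//|k] _ /=.
rewrite -!mulrnA -!natrD; apply/eqP; rewrite eqr_nat; apply/eqP; nia.
Qed.

Theorem mainTheorem1 (g n : nat) (hg : (1 <= g)%N) (hn : (1 <= n)%N) :
  exists N : nat,
    has_dim (@inv_hom g (4 * n)) N /\
    (2 ^ (2 * g) * N =
       'C(2 ^ g + 4 * n - 1, 4 * n)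
       + (2 ^ (2 * g) - 1) * 'C(2 ^ (g - 1) + 2 * n - 1, 2 * n))%N.
Proof.
exists #|exp_orbits g n|; split; first exact: has_dim_exp_orbits.
have /eqP := card_exp_orbits g n.
rewrite sum_fixed_char_sums card_F2vec eqr_nat => /eqP counting.
by rewrite mul2n -addnn expnD -counting mulnC mulnA.
Qed.
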